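(* Let $q\ge2$ and $r\in\{0,1,\dots,q-1\}$ be integers and let $p>q+r$ be an integer. Let $A=\{d\in\{0,1,\dots,p-1\}: d\equiv r \pmod q\}$, $s=\#A$ (so $s\ge 2$ and $h(i)=qi+r$ for $0\le i\le s-1$). Then \[ m=\inf_{n\ge1}b_n=\frac{q(s-1)+r}{p-1},\qquad M=\sup_{n\ge1}b_n=\frac{q(p-1)+pr}{p-1}. \]
   Context: For integers $p> s\ge 2$ and $A\subset\{0,\dots,p-1\}$ with $\#A=s$, let $h:\{0,\dots,s-1\}\to A$ be the strictly increasing bijection. For a positive integer $n$ with base-$s$ expansion $n=\sum_{i=0}^k\varepsilon_i s^i$ ($\varepsilon_k\ne0$), put $a_n=\sum_{i=0}^k h(\varepsilon_i)p^i$ and $b_n=a_n/n^{\log_s p}$. *)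

From Stdlib Require Import Reals Lra Lia Arith List.
Open Scope R_scope.

Definition digitset (q r p : nat) : list nat :=
  filter (fun d => Nat.eqb (Nat.modulo d q) r) (seq 0 p).

(* h : {0..s-1} -> A, the strictly increasing bijection (i-th smallest element
   of a set given as an increasing list). *)
Definition hmap (A : list nat) (i : nat) : nat := nth i A 0%nat.

(* a_n = sum_i h(eps_i) p^i where n = sum_i eps_i s^i (base-s expansion,
   eps_k <> 0).  Computed by recursion on n with fuel (fuel n suffices). *)
Fixpoint a_aux (s p : nat) (h : nat -> nat) (fuel n : nat) : nat :=
  match fuel with
  | O => 0%nat
  | S f => if Nat.eqb n 0 then 0%nat
           else (h (Nat.modulo n s) + p * a_aux s p h f (Nat.div n s))%nat
  end.

Definition a_seq (s p : nat) (h : nat -> nat) (n : nat) : nat := a_aux s p h n n.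

Definition b_seq (s p : nat) (h : nat -> nat) (n : nat) : R :=
  INR (a_seq s p h n) / Rpower (INR n) (ln (INR p) / ln (INR s)).

Definition is_lower_bound (E : R -> Prop) (m : R) : Prop := forall x, E x -> m <= x.
Definition is_glb (E : R -> Prop) (m : R) : Prop :=
  is_lower_bound E m /\ (forall b, is_lower_bound E b -> b <= m).

From Stdlib Require Import Reals Lra Lia Arith List.
Open Scope R_scope.

(* With alpha = log_s p, the function x |-> x^alpha is convex on (0, oo) and
   satisfies (s x)^alpha = p x^alpha, which matches the recursion
   a_(s k + e) = q e + r + p a_k.  Induction along this recursion gives
     m ((n + 1)^alpha - 1) <= a_n   and   a_n + r / (p - 1) <= M n^alpha,
   convexity absorbing the last digit e in both directions; hence m <= b_n <= M.
   The bounds are approached along n = s^k - 1, where a_n = m (p^k - 1), and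
   along n = s^k, where a_n = M p^k - r / (p - 1). *)

Lemma le_of_deriv_nonneg (f f' : R -> R) (a b : R) : a <= b ->
  (forall c, a <= c <= b -> derivable_pt_lim f c (f' c)) ->
  (forall c, a <= c <= b -> 0 <= f' c) -> f a <= f b.
Proof.
intros Hab Hd Hpos; destruct (Req_dec a b) as [<- | Hne]; [lra |].
destruct (MVT_cor2 f f' a b ltac:(lra) Hd) as [c [Hfc Hc]].
assert (0 <= f' c * (b - a)) by (apply Rmult_le_pos; [apply Hpos |]; lra).
lra.
Qed.

Section ConvexFunction.

Variables f f' : R -> R.
Hypothesis f_deriv : forall x, 0 < x -> derivable_pt_lim f x (f' x).
Hypothesis f'_mono : forall x y, 0 < x <= y -> f' x <= f' y.

Lemma convex_tangent_le x y : 0 < x -> 0 < y -> f x + f' x * (y - x) <= f y.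
Proof.
intros Hx Hy; destruct (Rtotal_order x y) as [Hxy | [<- | Hyx]]; [| lra |].
- destruct (MVT_cor2 f f' x y Hxy ltac:(intros; apply f_deriv; lra))
    as [c [Hfc Hc]].
  assert (f' x * (y - x) <= f' c * (y - x))
    by (apply Rmult_le_compat_r; [| apply f'_mono]; lra).
  lra.
- destruct (MVT_cor2 f f' y x Hyx ltac:(intros; apply f_deriv; lra))
    as [c [Hfc Hc]].
  assert (f' c * (x - y) <= f' x * (x - y))
    by (apply Rmult_le_compat_r; [| apply f'_mono]; lra).
  lra.
Qed.

Lemma convex_chord_le a t b : 0 < a <= t -> t <= b ->
  (f t - f a) * (b - a) <= (f b - f a) * (t - a).
Proof.
intros Hat Htb.
pose proof (convex_tangent_le t a ltac:(lra) ltac:(lra)) as Ha.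
pose proof (convex_tangent_le t b ltac:(lra) ltac:(lra)) as Hb.
assert (0 <= (f' t * (t - a) - (f t - f a)) * (b - t))
  by (apply Rmult_le_pos; lra).
assert (0 <= (f b - f t - f' t * (b - t)) * (t - a))
  by (apply Rmult_le_pos; lra).
nra.
Qed.

Lemma convex_increment_le x y d : 0 < x <= y -> 0 <= d ->
  f (x + d) - f x <= f (y + d) - f y.
Proof.
intros Hxy Hd.
apply (le_of_deriv_nonneg (fun t => f (t + d) - f t)
         (fun t => f' (t + d) * 1 - f' t)); [lra | |].
- intros c Hc; apply derivable_pt_lim_minus; [| apply f_deriv; lra].
  apply (derivable_pt_lim_comp (fun t => t + d) f c 1 (f' (c + d))).
  + rewrite <- (Rplus_0_r 1).
    apply derivable_pt_lim_plus;
      [apply derivable_pt_lim_id | apply derivable_pt_lim_const].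
  + apply f_deriv; lra.
- intros c Hc; pose proof (f'_mono c (c + d)); lra.
Qed.

End ConvexFunction.

Lemma Rpower_pos x y : 0 < Rpower x y.
Proof. apply exp_pos. Qed.

Lemma Rpower_1_l y : Rpower 1 y = 1.
Proof. unfold Rpower; rewrite ln_1, Rmult_0_r; apply exp_0. Qed.

Lemma Rpower_pow_l x y k : 0 < x -> Rpower (x ^ k) y = Rpower x y ^ k.
Proof.
intros Hx; rewrite <- !Rpower_pow by (try apply Rpower_pos; lra).
rewrite !Rpower_mult, Rmult_comm; reflexivity.
Qed.

Lemma ln_div_ge1 x y : 1 < x < y -> 1 <= ln y / ln x.
Proof.
intros Hxy.
assert (Hx : 0 < ln x) by (rewrite <- ln_1; apply ln_increasing; lra).
assert (ln x < ln y) by (apply ln_increasing; lra).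
apply (Rmult_le_reg_r (ln x)); [lra |].
unfold Rdiv; rewrite Rmult_assoc, Rinv_l by lra; lra.
Qed.

Section PowerFunction.

Variable alpha : R.
Hypothesis alpha_ge1 : 1 <= alpha.

Lemma Rpower_deriv_le x y : 0 < x <= y ->
  alpha * Rpower x (alpha - 1) <= alpha * Rpower y (alpha - 1).
Proof.
intros; apply Rmult_le_compat_l; [lra |]; apply Rle_Rpower_l; lra.
Qed.

Lemma Rpower_deriv_ge1 x : 1 <= x -> 1 <= alpha * Rpower x (alpha - 1).
Proof.
intros Hx.
assert (1 <= Rpower x (alpha - 1))
  by (rewrite <- (Rpower_O x) at 1 by lra; apply Rle_Rpower; lra).
assert (0 <= (alpha - 1) * (Rpower x (alpha - 1) - 1)) by (apply Rmult_le_pos; lra).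
nra.
Qed.

Lemma Rpower_tangent_le x y : 0 < x -> 0 < y ->
  Rpower x alpha + alpha * Rpower x (alpha - 1) * (y - x) <= Rpower y alpha.
Proof.
exact (convex_tangent_le (fun t => Rpower t alpha)
  (fun t => alpha * Rpower t (alpha - 1))
  (fun t => derivable_pt_lim_power t alpha) Rpower_deriv_le x y).
Qed.

Lemma Rpower_sub_ge x y : 1 <= x <= y -> y - x <= Rpower y alpha - Rpower x alpha.
Proof.
intros Hxy; pose proof (Rpower_tangent_le x y ltac:(lra) ltac:(lra)) as Ht.
assert (y - x <= alpha * Rpower x (alpha - 1) * (y - x))
  by (rewrite <- (Rmult_1_l (y - x)) at 1;
      apply Rmult_le_compat_r; [| apply Rpower_deriv_ge1]; lra).
lra.
Qed.

Lemma Rpower_pred_ge x : 1 < x ->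
  Rpower x alpha * (1 - alpha / x) <= Rpower (x - 1) alpha.
Proof.
intros Hx; pose proof (Rpower_tangent_le x (x - 1) ltac:(lra) ltac:(lra)) as Ht.
assert (Hsplit : Rpower x alpha = Rpower x (alpha - 1) * x).
{ rewrite <- (Rpower_1 x) at 3 by lra; rewrite <- Rpower_plus; f_equal; ring. }
replace (Rpower x alpha * (1 - alpha / x)) with
  (Rpower x alpha + alpha * Rpower x (alpha - 1) * (x - 1 - x)); [lra |].
rewrite Hsplit; field; lra.
Qed.

Lemma Rpower_chord t b : 1 <= t <= b ->
  (Rpower t alpha - 1) * (b - 1) <= (Rpower b alpha - 1) * (t - 1).
Proof.
intros Htb; rewrite <- (Rpower_1_l alpha) at 1 3.
apply (convex_chord_le (fun t => Rpower t alpha)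
         (fun t => alpha * Rpower t (alpha - 1)));
  [exact (fun t => derivable_pt_lim_power t alpha) | exact Rpower_deriv_le | lra | lra].
Qed.

Lemma Rpower_increment_le x y d : 0 < x <= y -> 0 <= d ->
  Rpower (x + d) alpha - Rpower x alpha <= Rpower (y + d) alpha - Rpower y alpha.
Proof.
apply (convex_increment_le (fun t => Rpower t alpha)
         (fun t => alpha * Rpower t (alpha - 1)));
  [exact (fun t => derivable_pt_lim_power t alpha) | exact Rpower_deriv_le].
Qed.

End PowerFunction.

Lemma filter_mod_seq q r N : (1 <= q)%nat -> (r < q)%nat ->
  exists k, filter (fun d => Nat.eqb (d mod q) r) (seq 0 N)
            = map (fun i => q * i + r)%nat (seq 0 k) /\
            forall i, (q * i + r < N <-> i < k)%nat.
Proof.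
intros Hq Hr; induction N as [| N [k [E F]]].
- exists 0%nat; split; [reflexivity | lia].
- rewrite seq_S, filter_app, E; simpl.
  destruct (Nat.eqb_spec (N mod q) r) as [Hm | Hm].
  + assert (HN : N = (q * (N / q) + r)%nat)
      by (rewrite <- Hm; apply Nat.div_mod; lia).
    assert (Hk : k = (N / q)%nat)
      by (pose proof (F k); pose proof (F (N / q)%nat); nia).
    exists (S k); split.
    * rewrite seq_S, map_app; simpl; rewrite Hk, <- HN; reflexivity.
    * intros i; nia.
  + exists k; split; [rewrite app_nil_r; reflexivity |].
    intros i; rewrite <- F; split; [| lia]; intros Hi.
    destruct (Nat.eq_dec (q * i + r) N) as [He | He]; [| lia].
    exfalso; apply Hm; rewrite <- He, Nat.add_comm, Nat.mul_comm, Nat.Div0.mod_add.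
    apply Nat.mod_small; lia.
Qed.

Lemma digitset_affine q r p : (2 <= q)%nat -> (r < q)%nat -> (q + r < p)%nat ->
  (2 <= length (digitset q r p) < p)%nat /\
  forall e, (e < length (digitset q r p))%nat ->
    hmap (digitset q r p) e = (q * e + r)%nat.
Proof.
intros Hq Hr Hp.
destruct (filter_mod_seq q r p ltac:(lia) Hr) as [k [E F]].
unfold hmap, digitset; rewrite E, length_map, length_seq; split.
- pose proof (proj1 (F 1%nat) ltac:(lia)); pose proof (proj2 (F (k - 1)%nat) ltac:(lia)).
  nia.
- intros e He.
  rewrite (nth_indep _ 0%nat ((fun i => q * i + r) 0)%nat)
    by (rewrite length_map, length_seq; lia).
  rewrite map_nth with (d := 0%nat), seq_nth by lia; reflexivity.
Qed.

Lemma a_aux_fuel_irrelevant s p h f f' n : (2 <= s)%nat ->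
  (n <= f)%nat -> (n <= f')%nat -> a_aux s p h f n = a_aux s p h f' n.
Proof.
intros Hs; revert f' n; induction f as [| f IH]; intros f' n Hf Hf'.
- replace n with 0%nat by lia; destruct f'; reflexivity.
- destruct f' as [| f']; [replace n with 0%nat by lia; reflexivity |].
  simpl; destruct (Nat.eqb_spec n 0); [reflexivity |].
  assert (n / s < n)%nat by (apply Nat.div_lt; lia).
  f_equal; f_equal; apply IH; lia.
Qed.

Lemma a_seq_step s p h n : (2 <= s)%nat -> (1 <= n)%nat ->
  a_seq s p h n = (h (n mod s) + p * a_seq s p h (n / s))%nat.
Proof.
intros Hs Hn; unfold a_seq; destruct n as [| n]; [lia |]; simpl a_aux at 1.
assert (S n / s < S n)%nat by (apply Nat.div_lt; lia).
rewrite (a_aux_fuel_irrelevant s p h n (S n / s)); auto; lia.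
Qed.

Section AffineDigitMap.

Variables (q r s p : nat) (h : nat -> nat).
Hypotheses (s_ge2 : (2 <= s)%nat) (s_lt_p : (s < p)%nat)
  (h_affine : forall e, (e < s)%nat -> h e = (q * e + r)%nat).

Let sR := INR s.
Let pR := INR p.
Let alpha := ln pR / ln sR.
Let a n := INR (a_seq s p h n).
Let c := INR r / (pR - 1).
Let m := (INR q * (sR - 1) + INR r) / (pR - 1).
Let M := (INR q * (pR - 1) + pR * INR r) / (pR - 1).

Lemma sR_pR_bounds : 2 <= sR /\ sR + 1 <= pR.
Proof.
split; [apply (le_INR 2) | unfold sR, pR; rewrite <- S_INR; apply le_INR]; lia.
Qed.

Lemma alpha_ge1 : 1 <= alpha.
Proof. pose proof sR_pR_bounds; apply ln_div_ge1; lra. Qed.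

Lemma Rpower_sR_alpha : Rpower sR alpha = pR.
Proof. pose proof sR_pR_bounds; apply Rpower_Rlog; lra. Qed.

Lemma Rpower_sR_mul x : 0 < x -> Rpower (sR * x) alpha = pR * Rpower x alpha.
Proof.
intros; pose proof sR_pR_bounds.
rewrite <- Rpower_mult_distr, Rpower_sR_alpha by lra; reflexivity.
Qed.

Lemma Rpower_INR_pow k : Rpower (INR (s ^ k)) alpha = pR ^ k.
Proof.
pose proof sR_pR_bounds; rewrite pow_INR, Rpower_pow_l by (unfold sR in *; lra).
fold sR; rewrite Rpower_sR_alpha; reflexivity.
Qed.

Lemma a_step n : (1 <= n)%nat ->
  a n = INR q * INR (n mod s) + INR r + pR * a (n / s).
Proof.
intros; unfold a; rewrite a_seq_step, h_affine by (try apply Nat.mod_upper_bound; lia).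
rewrite !plus_INR, !mult_INR; reflexivity.
Qed.

Lemma INR_div_mod n : INR n = sR * INR (n / s) + INR (n mod s).
Proof.
rewrite (Nat.div_mod n s) at 1 by lia; rewrite plus_INR, mult_INR; reflexivity.
Qed.

Lemma c_nonneg : 0 <= c.
Proof.
pose proof sR_pR_bounds; pose proof (pos_INR r).
apply Rmult_le_pos; [| left; apply Rinv_0_lt_compat]; lra.
Qed.

Lemma pR_mul_c : pR * c = INR r + c.
Proof. pose proof sR_pR_bounds; unfold c; field; lra. Qed.

Lemma M_eq : M = INR q + INR r + c.
Proof. pose proof sR_pR_bounds; unfold M, c; field; lra. Qed.

Lemma m_mul_pred_pR : m * (pR - 1) = INR q * (sR - 1) + INR r.
Proof. pose proof sR_pR_bounds; unfold m; field; lra. Qed.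

Lemma m_nonneg : 0 <= m.
Proof.
pose proof sR_pR_bounds; pose proof (pos_INR q); pose proof (pos_INR r).
apply Rmult_le_pos; [nra | left; apply Rinv_0_lt_compat; lra].
Qed.

Lemma a_add_c_le n : (1 <= n)%nat -> a n + c <= M * Rpower (INR n) alpha.
Proof.
pose proof sR_pR_bounds; pose proof alpha_ge1; pose proof c_nonneg.
pose proof pR_mul_c; pose proof M_eq; pose proof (pos_INR q); pose proof (pos_INR r).
induction n as [n IH] using lt_wf_ind; intros Hn.
rewrite a_step, (INR_div_mod n) by lia.
set (k := (n / s)%nat) in *; set (e := (n mod s)%nat) in *.
destruct (Nat.eq_dec k 0) as [Hk | Hk].
- assert (He : 1 <= INR e) by (apply (le_INR 1); pose proof (Nat.div_mod n s); lia).
  rewrite Hk; change (a 0) with 0.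
  replace (sR * INR 0 + INR e) with (INR e) by (simpl; ring).
  pose proof (Rpower_sub_ge alpha alpha_ge1 1 (INR e) ltac:(lra)).
  rewrite Rpower_1_l in *; nra.
- assert (Hk1 : 1 <= INR k) by (apply (le_INR 1); lia).
  assert (IHk : a k + c <= M * Rpower (INR k) alpha)
    by (apply IH; [apply Nat.div_lt |]; lia).
  pose proof (pos_INR e).
  pose proof (Rpower_sub_ge alpha alpha_ge1 (sR * INR k) (sR * INR k + INR e) ltac:(nra)).
  rewrite Rpower_sR_mul in * by lra.
  nra.
Qed.

Lemma digit_lower e : (e < s)%nat ->
  m * (Rpower (INR e + 1) alpha - 1) <= INR q * INR e + INR r.
Proof.
intros He; pose proof sR_pR_bounds; pose proof m_nonneg.
pose proof (pos_INR q); pose proof (pos_INR r); pose proof (pos_INR e).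
assert (HeS : INR e + 1 <= sR) by (rewrite <- S_INR; apply le_INR; lia).
pose proof (Rpower_chord alpha alpha_ge1 (INR e + 1) sR ltac:(lra)) as Hchord.
rewrite Rpower_sR_alpha in Hchord.
pose proof m_mul_pred_pR.
apply (Rmult_le_reg_r (sR - 1)); [lra |].
assert (m * ((Rpower (INR e + 1) alpha - 1) * (sR - 1)) <= m * ((pR - 1) * INR e))
  by (apply Rmult_le_compat_l; lra).
nra.
Qed.

Lemma Rpower_block_gap k e : (e < s)%nat ->
  pR - Rpower (INR e + 1) alpha
  <= pR * Rpower (INR k + 1) alpha - Rpower (sR * INR k + INR e + 1) alpha.
Proof.
intros He; pose proof sR_pR_bounds; pose proof (pos_INR k); pose proof (pos_INR e).
assert (HeS : INR e + 1 <= sR) by (rewrite <- S_INR; apply le_INR; lia).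
pose proof (Rpower_increment_le alpha alpha_ge1 (INR e + 1) (sR * INR k + INR e + 1)
  (sR - 1 - INR e) ltac:(nra) ltac:(lra)) as Hinc.
replace (INR e + 1 + (sR - 1 - INR e)) with sR in Hinc by ring.
replace (sR * INR k + INR e + 1 + (sR - 1 - INR e)) with (sR * (INR k + 1)) in Hinc
  by ring.
rewrite Rpower_sR_alpha, Rpower_sR_mul in Hinc by lra; lra.
Qed.

Lemma a_lower n : m * (Rpower (INR n + 1) alpha - 1) <= a n.
Proof.
pose proof sR_pR_bounds; pose proof m_nonneg.
induction n as [n IH] using lt_wf_ind.
destruct (Nat.eq_dec n 0) as [-> | Hn].
{ change (a 0) with 0; simpl INR; rewrite Rplus_0_l, Rpower_1_l; lra. }
rewrite a_step, (INR_div_mod n) by lia.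
assert (Hk : (n / s < n)%nat) by (apply Nat.div_lt; lia).
pose proof (IH _ Hk).
pose proof (digit_lower (n mod s) ltac:(apply Nat.mod_upper_bound; lia)).
pose proof (Rpower_block_gap (n / s) (n mod s) ltac:(apply Nat.mod_upper_bound; lia)).
nra.
Qed.

Lemma b_seq_mul_Rpower n : b_seq s p h n * Rpower (INR n) alpha = a n.
Proof.
unfold b_seq; rewrite <- Rmult_div_swap, Rmult_div_l; [reflexivity |].
apply Rgt_not_eq, Rpower_pos.
Qed.

Lemma b_seq_ge n : (1 <= n)%nat -> m <= b_seq s p h n.
Proof.
intros Hn; pose proof (a_lower n); pose proof m_nonneg.
assert (1 <= INR n) by (apply (le_INR 1); lia).
pose proof (Rpower_sub_ge alpha alpha_ge1 (INR n) (INR n + 1) ltac:(lra)).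
apply (Rmult_le_reg_r (Rpower (INR n) alpha)); [apply Rpower_pos |].
rewrite b_seq_mul_Rpower; nra.
Qed.

Lemma b_seq_le n : (1 <= n)%nat -> b_seq s p h n <= M.
Proof.
intros Hn; pose proof (a_add_c_le n Hn); pose proof c_nonneg.
apply (Rmult_le_reg_r (Rpower (INR n) alpha)); [apply Rpower_pos |].
rewrite b_seq_mul_Rpower; lra.
Qed.

Lemma a_digit_step k e : (e < s)%nat -> (1 <= s * k + e)%nat ->
  a (s * k + e) = INR q * INR e + INR r + pR * a k.
Proof.
intros He Hn; rewrite a_step by lia.
rewrite <- (Nat.mod_unique (s * k + e) s k e), <- (Nat.div_unique (s * k + e) s k e);
  auto.
Qed.

Lemma a_pow k : a (s ^ k) = M * pR ^ k - c.
Proof.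
pose proof sR_pR_bounds; pose proof pR_mul_c; pose proof M_eq.
induction k as [| k IHk].
- replace (a (s ^ 0)) with (a (s * 0 + 1)) by (f_equal; simpl; lia).
  rewrite a_digit_step by lia; change (a 0) with 0; simpl; lra.
- rewrite Nat.pow_succ_r', <- (Nat.add_0_r (s * s ^ k)).
  rewrite a_digit_step, IHk by (pose proof (Nat.pow_gt_lin_r s k); nia).
  simpl; nra.
Qed.

Lemma a_pow_pred k : a (s ^ k - 1) = m * (pR ^ k - 1).
Proof.
pose proof sR_pR_bounds; pose proof m_mul_pred_pR.
induction k as [| k IHk].
- simpl; change (a 0) with 0; ring.
- pose proof (Nat.pow_gt_lin_r s k).
  rewrite Nat.pow_succ_r'.
  replace (s * s ^ k - 1)%nat with (s * (s ^ k - 1) + (s - 1))%nat by nia.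
  rewrite a_digit_step, IHk, minus_INR by lia.
  simpl; fold sR; nra.
Qed.

Lemma INR_lt_pow k : INR k < pR ^ k.
Proof.
unfold pR; rewrite <- pow_INR; apply lt_INR, Nat.pow_gt_lin_r; lia.
Qed.

Lemma b_seq_approx_sup beta : beta < M ->
  exists n, (1 <= n)%nat /\ beta < b_seq s p h n.
Proof.
intros Hb; pose proof sR_pR_bounds; pose proof c_nonneg.
destruct (INR_unbounded (c / (M - beta))) as [k Hk].
exists (s ^ k)%nat; split; [pose proof (Nat.pow_gt_lin_r s k); lia |].
pose proof (INR_lt_pow k).
assert (Hck : c < (M - beta) * pR ^ k).
{ apply (Rle_lt_trans _ (c / (M - beta) * (M - beta))); [right; field; lra |].
  rewrite (Rmult_comm (M - beta)); apply Rmult_lt_compat_r; lra. }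
apply (Rmult_lt_reg_r (Rpower (INR (s ^ k)) alpha)); [apply Rpower_pos |].
rewrite b_seq_mul_Rpower, a_pow, Rpower_INR_pow; lra.
Qed.

Lemma b_seq_approx_inf beta : m < beta ->
  exists n, (1 <= n)%nat /\ b_seq s p h n < beta.
Proof.
intros Hb; pose proof sR_pR_bounds; pose proof m_nonneg; pose proof alpha_ge1.
destruct (INR_unbounded (beta * alpha / (beta - m))) as [k Hk].
pose proof (Nat.pow_gt_lin_r s (S k) ltac:(lia)) as Hsk.
set (X := INR (s ^ S k)).
assert (HX : INR (S k) < X) by (apply lt_INR; lia).
rewrite S_INR in HX.
exists (s ^ S k - 1)%nat; split; [lia |].
assert (Halpha : beta * alpha < (beta - m) * X).
{ apply (Rle_lt_trans _ (beta * alpha / (beta - m) * (beta - m))); [right; field; lra |].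
  rewrite (Rmult_comm (beta - m)); apply Rmult_lt_compat_r; lra. }
pose proof (pos_INR k).
pose proof (Rpower_pred_ge alpha alpha_ge1 X ltac:(lra)) as Hpred.
unfold X in Hpred at 1; rewrite Rpower_INR_pow in Hpred.
pose proof (pow_lt pR (S k) ltac:(lra)).
assert (HX1 : INR (s ^ S k - 1) = X - 1) by (rewrite minus_INR by lia; reflexivity).
assert (Hm : m < beta * (1 - alpha / X)).
{ apply (Rmult_lt_reg_r X); [lra |].
  replace (beta * (1 - alpha / X) * X) with (beta * X - beta * alpha) by (field; lra).
  lra. }
apply (Rmult_lt_reg_r (Rpower (INR (s ^ S k - 1)) alpha)); [apply Rpower_pos |].
rewrite b_seq_mul_Rpower, a_pow_pred, HX1.
assert (m * pR ^ S k < beta * (1 - alpha / X) * pR ^ S k)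
  by (apply Rmult_lt_compat_r; lra).
assert (beta * (pR ^ S k * (1 - alpha / X)) <= beta * Rpower (X - 1) alpha)
  by (apply Rmult_le_compat_l; lra).
nra.
Qed.

End AffineDigitMap.

Lemma is_lub_of_approx (E : R -> Prop) M : is_upper_bound E M ->
  (forall b, b < M -> exists x, E x /\ b < x) -> is_lub E M.
Proof.
intros HM Happrox; split; [exact HM |]; intros b Hb.
apply Rnot_lt_le; intros Hlt; destruct (Happrox b Hlt) as [x [Hx Hbx]].
specialize (Hb x Hx); lra.
Qed.

Lemma is_glb_of_approx (E : R -> Prop) m : is_lower_bound E m ->
  (forall b, m < b -> exists x, E x /\ x < b) -> is_glb E m.
Proof.
intros Hm Happrox; split; [exact Hm |]; intros b Hb.
apply Rnot_lt_le; intros Hlt; destruct (Happrox b Hlt) as [x [Hx Hxb]].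
specialize (Hb x Hx); lra.
Qed.

Theorem theorem5 (q r p : nat) :
  (2 <= q)%nat -> (r < q)%nat -> (q + r < p)%nat ->
  let A := digitset q r p in
  let s := length A in
  let b := b_seq s p (hmap A) in
  is_glb (fun x => exists n : nat, (1 <= n)%nat /\ x = b n)
         ((INR q * (INR s - 1) + INR r) / (INR p - 1)) /\
  is_lub (fun x => exists n : nat, (1 <= n)%nat /\ x = b n)
         ((INR q * (INR p - 1) + INR p * INR r) / (INR p - 1)).
Proof.
intros Hq Hr Hp A s b.
destruct (digitset_affine q r p Hq Hr Hp) as [[Hs Hsp] Hh].
split; [apply is_glb_of_approx | apply is_lub_of_approx].
- intros x [n [Hn ->]]; exact (b_seq_ge q r s p (hmap A) Hs Hsp Hh n Hn).
- intros beta Hbeta.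
  destruct (b_seq_approx_inf q r s p (hmap A) Hs Hsp Hh beta Hbeta) as [n [Hn Hbn]].
  exists (b n); split; [exists n |]; auto.
- intros x [n [Hn ->]]; exact (b_seq_le q r s p (hmap A) Hs Hsp Hh n Hn).
- intros beta Hbeta.
  destruct (b_seq_approx_sup q r s p (hmap A) Hs Hsp Hh beta Hbeta) as [n [Hn Hbn]].
  exists (b n); split; [exists n |]; auto.
Qed.
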